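(* Let $p,q\geq1$ be integers and let $\gamma(s)=(x(s),y(s))$ be a smooth curve with $x,y>0$, parametrized by arc length, with $\dot x=\cos\alpha$, $\dot y=\sin\alpha$ for a smooth function $\alpha(s)$, satisfying $$3\dot\alpha+p\,\frac{\sin\alpha}{x}-q\,\frac{\cos\alpha}{y}=0.$$ Let $I=y^{q/3}\cos\alpha$ and $J=x^{p/3}\sin\alpha$. Then $I$ and $J$ are increasing along such solutions. *)

From Stdlib Require Import Reals.
From Coquelicot Require Import Coquelicot.
Open Scope R_scope.

Definition in_interval (a b : Rbar) (s : R) : Prop :=
  Rbar_lt a s /\ Rbar_lt s b.

Definition smooth_on (a b : Rbar) (f : R -> R) : Prop :=
  forall (n : nat) (s : R), in_interval a b s -> ex_derive_n f n s.

Definition I_inv (q : nat) (y alpha : R -> R) (s : R) : R :=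
  Rpower (y s) (INR q / 3) * cos (alpha s).
Definition J_inv (p : nat) (x alpha : R -> R) (s : R) : R :=
  Rpower (x s) (INR p / 3) * sin (alpha s).

(* Along a solution, 3 alpha' = q cos(alpha)/y - p sin(alpha)/x.  Differentiating,
   I' = y^(q/3) (q/3 sin(alpha) cos(alpha)/y - sin(alpha) alpha')
      = (p/3) y^(q/3) sin(alpha)^2 / x  >= 0,
   and symmetrically J' = (q/3) x^(p/3) cos(alpha)^2 / y >= 0: the curvature term
   cancels the cross term exactly, leaving a square. *)

From Stdlib Require Import Reals Lra.
From Coquelicot Require Import Coquelicot.
Open Scope R_scope.

Lemma in_interval_between (a b : Rbar) (s t u : R) :
  in_interval a b s -> in_interval a b t -> s <= u <= t -> in_interval a b u.
Proof.
  intros [Has _] [_ Htb] [Hsu Hut]; split.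
  - apply (Rbar_lt_le_trans _ s); [exact Has | simpl; lra].
  - apply (Rbar_le_lt_trans _ t); [simpl; lra | exact Htb].
Qed.

Lemma nondecreasing_of_derive_nonneg (a b : Rbar) (f df : R -> R) :
  (forall u, in_interval a b u -> is_derive f u (df u)) ->
  (forall u, in_interval a b u -> 0 <= df u) ->
  forall s t, in_interval a b s -> in_interval a b t -> s <= t -> f s <= f t.
Proof.
  intros Df df_ge0 s t Hs Ht Hst.
  assert (Hin : forall u, Rmin s t <= u <= Rmax s t -> in_interval a b u).
  { rewrite Rmin_left, Rmax_right by lra.
    intros u Hu; exact (in_interval_between a b s t u Hs Ht Hu). }
  destruct (MVT_gen f s t df) as [c [Hc Hmvt]].
  - intros u Hu; apply Df, Hin; lra.
  - intros u Hu; apply continuity_pt_filterlim, (ex_derive_continuous f).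
    exists (df u); apply Df, Hin, Hu.
  - assert (0 <= df c * (t - s)) by (apply Rmult_le_pos; [apply df_ge0, Hin, Hc | lra]).
    lra.
Qed.

Lemma is_derive_Rpower_comp (g : R -> R) (c u dg : R) :
  0 < g u -> is_derive g u dg ->
  is_derive (fun v => Rpower (g v) c) u (Rpower (g u) c * (c * (dg / g u))).
Proof.
  intros g_pos Dg; unfold Rpower.
  assert (Dlog : is_derive (fun v => c * ln (g v)) u (c * (dg / g u))).
  { apply (is_derive_scal (fun v => ln (g v))).
    exact (is_derive_comp ln g u (/ g u) dg (is_derive_ln _ g_pos) Dg). }
  rewrite Rmult_comm.
  exact (is_derive_comp exp (fun v => c * ln (g v)) u _ _ (is_derive_exp _) Dlog).
Qed.

Section Invariants.

Variables (p q : nat) (a b : Rbar) (x y alpha : R -> R).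

Hypothesis xy_pos : forall s, in_interval a b s -> 0 < x s /\ 0 < y s.
Hypothesis x_derive : forall s, in_interval a b s -> is_derive x s (cos (alpha s)).
Hypothesis y_derive : forall s, in_interval a b s -> is_derive y s (sin (alpha s)).
Hypothesis alpha_derivable : forall s, in_interval a b s -> ex_derive alpha s.
Hypothesis alpha_ode : forall s, in_interval a b s ->
  3 * Derive alpha s + INR p * sin (alpha s) / x s - INR q * cos (alpha s) / y s = 0.

Let alpha_derive_eq s : in_interval a b s ->
  Derive alpha s = (INR q * cos (alpha s) / y s - INR p * sin (alpha s) / x s) / 3.
Proof. intros Hs; pose proof (alpha_ode s Hs); lra. Qed.

Lemma is_derive_I_inv s : in_interval a b s ->
  is_derive (I_inv q y alpha) s
    (INR p * Rpower (y s) (INR q / 3) * sin (alpha s) ^ 2 / (3 * x s)).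
Proof.
  intros Hs; destruct (xy_pos s Hs) as [x_pos y_pos].
  pose proof (is_derive_mult _ _ s _ _
    (is_derive_Rpower_comp y (INR q / 3) s _ y_pos (y_derive s Hs))
    (is_derive_comp cos alpha s _ _ (is_derive_cos _) (Derive_correct _ _ (alpha_derivable s Hs)))
    Rmult_comm) as D.
  unfold I_inv; refine (eq_ind _ (is_derive _ s) D _ _).
  unfold plus, mult, scal; simpl; unfold mult; simpl.
  rewrite (alpha_derive_eq s Hs); field; lra.
Qed.

Lemma is_derive_J_inv s : in_interval a b s ->
  is_derive (J_inv p x alpha) s
    (INR q * Rpower (x s) (INR p / 3) * cos (alpha s) ^ 2 / (3 * y s)).
Proof.
  intros Hs; destruct (xy_pos s Hs) as [x_pos y_pos].
  pose proof (is_derive_mult _ _ s _ _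
    (is_derive_Rpower_comp x (INR p / 3) s _ x_pos (x_derive s Hs))
    (is_derive_comp sin alpha s _ _ (is_derive_sin _) (Derive_correct _ _ (alpha_derivable s Hs)))
    Rmult_comm) as D.
  unfold J_inv; refine (eq_ind _ (is_derive _ s) D _ _).
  unfold plus, mult, scal; simpl; unfold mult; simpl.
  rewrite (alpha_derive_eq s Hs); field; lra.
Qed.

Lemma I_inv_nondecreasing s t :
  in_interval a b s -> in_interval a b t -> s <= t ->
  I_inv q y alpha s <= I_inv q y alpha t.
Proof.
  apply (nondecreasing_of_derive_nonneg a b _ _ is_derive_I_inv).
  intros u Hu; destruct (xy_pos u Hu) as [x_pos _].
  assert (0 <= INR p) by apply pos_INR.
  assert (0 < Rpower (y u) (INR q / 3)) by apply exp_pos.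
  apply Rmult_le_pos; [| apply Rlt_le, Rinv_0_lt_compat; lra].
  apply Rmult_le_pos; [apply Rmult_le_pos; lra | apply pow2_ge_0].
Qed.

Lemma J_inv_nondecreasing s t :
  in_interval a b s -> in_interval a b t -> s <= t ->
  J_inv p x alpha s <= J_inv p x alpha t.
Proof.
  apply (nondecreasing_of_derive_nonneg a b _ _ is_derive_J_inv).
  intros u Hu; destruct (xy_pos u Hu) as [_ y_pos].
  assert (0 <= INR q) by apply pos_INR.
  assert (0 < Rpower (x u) (INR p / 3)) by apply exp_pos.
  apply Rmult_le_pos; [| apply Rlt_le, Rinv_0_lt_compat; lra].
  apply Rmult_le_pos; [apply Rmult_le_pos; lra | apply pow2_ge_0].
Qed.

End Invariants.

Theorem lemma4p3 (p q : nat) (a b : Rbar) (x y alpha : R -> R) :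
  (1 <= p)%nat -> (1 <= q)%nat ->
  smooth_on a b x -> smooth_on a b y -> smooth_on a b alpha ->
  (forall s, in_interval a b s -> 0 < x s /\ 0 < y s) ->
  (forall s, in_interval a b s -> is_derive x s (cos (alpha s))) ->
  (forall s, in_interval a b s -> is_derive y s (sin (alpha s))) ->
  (forall s, in_interval a b s ->
     3 * Derive alpha s + INR p * sin (alpha s) / x s
       - INR q * cos (alpha s) / y s = 0) ->
  forall s t, in_interval a b s -> in_interval a b t -> s <= t ->
    I_inv q y alpha s <= I_inv q y alpha t /\
    J_inv p x alpha s <= J_inv p x alpha t.
Proof.
  intros _ _ _ _ alpha_smooth xy_pos x_derive y_derive alpha_ode s t Hs Ht Hst.
  assert (alpha_derivable : forall u, in_interval a b u -> ex_derive alpha u)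
    by (intros u Hu; exact (alpha_smooth 1%nat u Hu)).
  split.
  - exact (I_inv_nondecreasing p q a b x y alpha xy_pos y_derive alpha_derivable
             alpha_ode s t Hs Ht Hst).
  - exact (J_inv_nondecreasing p q a b x y alpha xy_pos x_derive alpha_derivable
             alpha_ode s t Hs Ht Hst).
Qed.
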